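(* Let $(H,T)$ be a coupling time with ambiguities of finite width for the interacting particle system described in the context, and assume that $\Lambda_T(\lambda)=\mathbb{E}[e^{-\lambda T}]$ is finite for some $\lambda>0$. Then $\Lambda_H(\lambda')$ is finite for every $\lambda'<\lambda$.
   Context: Let $S$ be a finite set and $\mathfrak{J}$ a finite index set; for each $i\in\mathfrak{J}$ fix a finite $A_i\subset\mathbb{Z}$, $\ell_i\subset S^{A_i}$, $s_i\in S$, $r_i\ge0$. Graphical construction: on $(\Omega,\mathcal{F},\mathbb{P})$, independent Poisson processes $\Psi(x,i)$ on $(-\infty,0)$ with rates $r_i$, points $0>\Psi(x,i,1)>\Psi(x,i,2)>\cdots$; $\mathcal{F}(x,i)=\sigma(\Psi(x,i))$. Starting from $\xi\in S^{\mathbb{Z}}$ at time $u<0$, at each point $t=\Psi(x,i,k)>u$, if the configuration just before $t$ restricted to $x+A_i$ lies in $\ell_i$ (always if $A_i=\emptyset$), site $x$ is set to $s_i$ (the point is ''performed''). $\Phi(\xi,u,0^-,0)$ is the state of site $0$ just before time $0$; $\mathrm{Perf}(\xi,u,x,i,k)$ indicates whether $\Psi(x,i,k)$ is performed. For a random time $U\le0$, $\mathcal{F}^+(U)$ is generated by the numbers of points of each $\Psi(x,i)$ in $[U,0)$ and their positions. A coupling time with ambiguities is a pair $(H,T)$ ($H=\{H(x,i,k)\}$ $\{0,1\}$-valued, $T$ real) with: (1) $T\in(-\infty,0)$ a.s.; (2) a.s. finitely many $H(x,i,k)\ne0$; (3) a.s. $H(x,i,k)=0$ if $\Psi(x,i,k)<T$;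 (4) $H(x,i,k)$ is $\mathcal{F}^+(\Psi(x,i,k))$-measurable; (5) a.s., for all $t<T$ and $\xi,\xi'$, equality of $\mathrm{Perf}(\cdot,t,x,i,k)H(x,i,k)$ for all $(x,i,k)$ implies $\Phi(\xi,t,0^-,0)=\Phi(\xi',t,0^-,0)$. Its width is bounded by nonnegative integers $(a_-,a_+)$ if: (i) $H$ is measurable w.r.t. $\sigma(\mathcal{F}(x,i);-a_-\le x\le a_+,i\in\mathfrak{J})$; (ii) a.s., $H(x,i,k)=1$ implies $x+A_i\subset[-a_-,a_+]$; (iii) there is a map $\Theta$ on $\Omega\times\{0,1\}^{\mathbb{Z}\times\mathfrak{J}\times\{1,2,\dots\}}$ with values in $S$, measurable w.r.t. $\sigma(\mathcal{F}(x,i);-a_-\le x\le a_+)\otimes$(product $\sigma$-algebra), with $\Phi(\xi,t,0^-,0)=\Theta(\Psi,(\mathrm{Perf}(\xi,t,x,i,k)H(x,i,k))_{x,i,k})$ a.s. for all $t<T$, $\xi$. Finite width means bounded by some such pair. $\Lambda_H(\lambda)=\mathbb{E}[\sum_{x,i,k}(\#A_i)e^{-\lambda\Psi(x,i,k)}H(x,i,k)]$. *)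

From HB Require Import structures.
From mathcomp Require Import all_boot all_order all_algebra.
From mathcomp Require Import all_classical all_reals all_analysis.
From mathcomp Require Import measurable_realfun.
Set Implicit Arguments. Unset Strict Implicit. Unset Printing Implicit Defensive.
Import Order.TTheory GRing.Theory Num.Theory.
Local Open Scope classical_set_scope.
Local Open Scope ring_scope.

(* CONVENTION: the nat index k stands for
   the paper's k+1, i.e. Psi w x i 0 is the paper's Psi(x,i,1) (the latest
   point before time 0), Psi w x i 1 is Psi(x,i,2), etc. *)

(** Points of the Poisson processes, built from interarrival times E:
    Psi(x,i,k+1) = -(E(x,i,0)+...+E(x,i,k)); if r_i = 0 the process has
    no points, encoded by all "points" being at -oo (they never lie in any
    interval [u,0), u real). *)
Definition psi_of {Omega : Type} {R : realType} {J : finType} (r : J -> R)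
  (E : Omega -> int -> J -> nat -> R) (w : Omega) (x : int) (i : J) (k : nat)
  : \bar R :=
  if 0 < r i then ((- \sum_(j < k.+1) E w x i j)%R)%:E else -oo%E.

Definition mutually_independent {d} {Omega : measurableType d} {R : realType}
  {J : finType} (P : probability Omega R) (E : Omega -> int -> J -> nat -> R) :=
  forall (l : seq (int * J * nat)) (B : int * J * nat -> set R),
    uniq l -> (forall p, measurable (B p)) ->
    P [set w | forall p, p \in l -> B p (E w p.1.1 p.1.2 p.2)] =
    (\prod_(p <- l) P [set w | B p (E w p.1.1 p.1.2 p.2)])%E.

(** Psi is a family of independent Poisson processes on (-oo,0) with rates
    r_i: the gaps between consecutive points (going backwards from 0) are
    independent Exp(r_i) random variables. *)
Definition poisson_family {d} {Omega : measurableType d} {R : realType}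
  {J : finType} (P : probability Omega R) (r : J -> R)
  (Psi : Omega -> int -> J -> nat -> \bar R) :=
  exists E : Omega -> int -> J -> nat -> R,
    [/\ (forall x i k, measurable_fun setT (fun w => E w x i k)),
        (forall x i k, 0 < r i -> forall B : set R, measurable B ->
            P [set w | B (E w x i k)] = exponential_prob (r i) B),
        mutually_independent P E &
        (forall w x i k, Psi w x i k = psi_of r E w x i k)].

(** A configuration on x + A_i
    is encoded as the list of its values in the order of the list A i. *)
Definition rule_ok {J : finType} {S : finType} (A : J -> seq int) (ell : J -> pred (seq S))
  (i : J) (x : int) (conf : int -> S) : bool :=
  (nilp (A i)) || ell i [seq conf (x + a) | a <- A i].

(** Graphical construction from xi at time u, for the realisation psi of
    the points.  perf x i k = whether the point psi x i k is performed;
    eta x t = the state of site x just before time t (for u < t <= 0). *)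
Definition graphical {R : realType} {J : finType} {S : finType} (A : J -> seq int)
  (ell : J -> pred (seq S)) (s : J -> S)
  (psi : int -> J -> nat -> \bar R) (xi : int -> S) (u : R)
  (perf : int -> J -> nat -> bool) (eta : int -> R -> S) : Prop :=
  (forall x i k, perf x i k =
      [&& (u%:E < psi x i k)%E, (psi x i k < 0%:E)%E &
          rule_ok A ell i x (fun y => eta y (fine (psi x i k)))]) /\
  (forall x (t : R), u < t <= 0 ->
     (exists i k, [/\ perf x i k, (u%:E < psi x i k < t%:E)%E,
                      eta x t = s i &
                      forall i' k', perf x i' k' ->
                        (u%:E < psi x i' k' < t%:E)%E ->
                        (psi x i' k' <= psi x i k)%E])
     \/ ((forall i k, perf x i k -> ~ (u%:E < psi x i k < t%:E)%E) /\
         eta x t = xi x)).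

(** Generating class of F^+(U): numbers of points of each Psi(x,i) in
    [U,0) and their positions. *)
Definition Fplus_gen {Omega : Type} {R : realType} {J : finType}
  (Psi : Omega -> int -> J -> nat -> \bar R) (U : Omega -> \bar R)
  : set (set Omega) :=
  [set Aset | exists x i k (B : set (\bar R)), measurable B /\
     Aset = [set w | (U w <= Psi w x i k)%E /\ B (Psi w x i k)]].

Definition Fplus {Omega : Type} {R : realType} {J : finType}
  (Psi : Omega -> int -> J -> nat -> \bar R) (U : Omega -> \bar R)
  : set (set Omega) := smallest (sigma_algebra setT) (Fplus_gen Psi U).

Definition Frange {Omega : Type} {R : realType} {J : finType}
  (Psi : Omega -> int -> J -> nat -> \bar R) (a b : nat) : set (set Omega) :=
  smallest (sigma_algebra setT)
    [set Aset | exists x i k (B : set (\bar R)),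
       [/\ - (a%:Z) <= x <= b%:Z, measurable B &
           Aset = [set w | B (Psi w x i k)]]].

Definition Ftheta {Omega : Type} {R : realType} {J : finType}
  (Psi : Omega -> int -> J -> nat -> \bar R) (a b : nat)
  : set (set (Omega * (int -> J -> nat -> bool))) :=
  smallest (sigma_algebra setT)
    ([set Z | exists Aset, Frange Psi a b Aset /\ Z = [set z | Aset z.1]] `|`
     [set Z | exists x i k, Z = [set z : Omega * (int -> J -> nat -> bool) | z.2 x i k]]).

Definition coupling_time {d} {Omega : measurableType d} {R : realType}
  {J S : finType} (P : probability Omega R) (A : J -> seq int)
  (ell : J -> pred (seq S)) (s : J -> S)
  (Psi : Omega -> int -> J -> nat -> \bar R)
  (H : Omega -> int -> J -> nat -> bool) (T : Omega -> R) : Prop :=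
  [/\ {ae P, forall w, T w < 0},
      {ae P, forall w, finite_set [set p : int * J * nat | H w p.1.1 p.1.2 p.2]},
      {ae P, forall w x i k, (Psi w x i k < (T w)%:E)%E -> H w x i k = false},
      (forall x i k, Fplus Psi (fun w => Psi w x i k) [set w | H w x i k]) &
      {ae P, forall w, forall (t : R) (xi xi' : int -> S)
          perf eta perf' eta', t < T w ->
          graphical A ell s (Psi w) xi t perf eta ->
          graphical A ell s (Psi w) xi' t perf' eta' ->
          (forall x i k, perf x i k && H w x i k = perf' x i k && H w x i k) ->
          eta 0 0 = eta' 0 0}].

Definition width_bounded {d} {Omega : measurableType d} {R : realType}
  {J S : finType} (P : probability Omega R) (A : J -> seq int)
  (ell : J -> pred (seq S)) (s : J -> S)
  (Psi : Omega -> int -> J -> nat -> \bar R)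
  (H : Omega -> int -> J -> nat -> bool) (T : Omega -> R) (a b : nat) : Prop :=
  [/\ (forall x i k, Frange Psi a b [set w | H w x i k]),
      {ae P, forall w x i k, H w x i k ->
          forall y, y \in A i -> - (a%:Z) <= x + y <= b%:Z} &
      exists Theta : Omega * (int -> J -> nat -> bool) -> S,
        (forall v : S, Ftheta Psi a b (Theta @^-1` [set v])) /\
        {ae P, forall w, forall (t : R) (xi : int -> S) perf eta, t < T w ->
            graphical A ell s (Psi w) xi t perf eta ->
            eta 0 0 = Theta (w, fun x i k => perf x i k && H w x i k)}].

Definition Lambda_H {d} {Omega : measurableType d} {R : realType}
  {J : finType} (P : probability Omega R) (A : J -> seq int)
  (Psi : Omega -> int -> J -> nat -> \bar R)
  (H : Omega -> int -> J -> nat -> bool) (lam : R) : \bar R :=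
  (\int[P]_w \esum_(p in [set: int * J * nat])
      (if H w p.1.1 p.1.2 p.2
       then (size (A p.1.2))%:R%:E * expeR ((- lam)%:E * Psi w p.1.1 p.1.2 p.2)
       else 0))%E.

Definition Lambda_T {d} {Omega : measurableType d} {R : realType}
  (P : probability Omega R) (T : Omega -> R) (lam : R) : \bar R :=
  (\int[P]_w (expR (- lam * T w))%:E)%E.

(* Points that can carry [H = 1] lie in the finite window of sites [x] with
   [x + A_i] inside [[-a, b]], and at times [Psi(x,i,k) >= T], so that
   [S_k := -Psi(x,i,k) <= -T] where [S_k] is a sum of [k + 1] independent
   [Exp(r_i)] gaps.  Put [mu := max(lam', 0) < lam].  If [S_k <= beta k], at
   least half of the gaps are [<= 2 beta], an event of probability at most
   [(2 rho)^(k+1)], and [e^(lam' S_k) <= e^(mu beta k)]; otherwise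
   [-T > beta k] and [e^(lam' S_k) <= e^(mu (-T)) <= e^(-(lam - mu) beta k) e^(-lam T)].
   Taking [rho := 1 / (4 e^(mu beta))] and [beta] small enough that
   [r_i * 2 beta <= rho^2], both bounds are geometric in [k], with expectations
   controlled by [Lambda_T(lam) < +oo]. *)

From HB Require Import structures.
From mathcomp Require Import all_boot all_order all_algebra.
From mathcomp Require Import all_classical all_reals all_analysis.
From mathcomp Require Import measurable_realfun.
From mathcomp Require Import ring lra zify.
Import Order.TTheory GRing.Theory Num.Theory.
Import HBNNSimple.
Local Open Scope classical_set_scope.
Local Open Scope ring_scope.

Lemma nneseries_lt_pinfty_geometric {R : realType} (u : nat -> \bar R) (C q : R) :
  0 <= q < 1 -> (forall k, (0 <= u k)%E) -> (forall k, (u k <= (C * q ^+ k)%:E)%E) ->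
  (\sum_(k <oo) u k < +oo)%E.
Proof.
move=> /andP[q0 q1] u0 uC.
apply: (le_lt_trans (lee_nneseries _ _)); first by move=> k _ _; exact: u0.
  by move=> n _; exact: uC.
have -> : (fun n => \sum_(0 <= k < n) (C * q ^+ k)%:E)%E = EFin \o series (geometric C q).
  by apply/funext => n /=; rewrite sumEFin.
rewrite /= EFin_lim ?ltry//; apply: is_cvg_geometric_series.
by rewrite ger0_norm.
Qed.

(* [f] need not be measurable: its integral is a supremum over simple functions. *)
Lemma ge0_le_integral_ae_majorant {d} {T : measurableType d} {R : realType}
  (mu : {measure set T -> \bar R}) (f g : T -> \bar R) :
  (forall x, (0 <= f x)%E) -> (forall x, (0 <= g x)%E) -> measurable_fun setT g ->
  {ae mu, forall x, (f x <= g x)%E} -> (\int[mu]_x f x <= \int[mu]_x g x)%E.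
Proof.
move=> f0 g0 mg [N [mN muN fgN]].
rewrite {1}/integral -[leRHS]sube0; apply: leeB; last first.
  apply: ereal_sup_ubound; exists nnsfun0 => //; last exact: sintegral0.
  by move=> x; exact: funeneg_ge0.
apply: ge_ereal_sup => _ [h hf <-].
rewrite -[h in sintegral _ h](patch_setT (fun=> 0%R)) -integral_nnsfun//.
apply: ae_ge0_le_integral => //.
- by move=> x _; rewrite lee_fin.
- by apply/measurable_EFinP; exact: measurable_funP.
- exists N; split => // x /=; apply: contra_notP => Nx _.
  apply: le_trans (hf x) _; rewrite patch_setT (@ge0_funeposE _ _ setT) ?inE//.
  by apply: contra_notP Nx => /fgN.
Qed.

Lemma measure_bigsetU_le {d} {T : measurableType d} {R : realType}
  (mu : {measure set T -> \bar R}) {I : Type} (s : seq I) (Q : pred I)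
  (F : I -> set T) : (forall i, measurable (F i)) ->
  (mu (\big[setU/set0]_(i <- s | Q i) F i) <= \sum_(i <- s | Q i) mu (F i))%E.
Proof.
move=> mF; elim: s => [|a s IH]; first by rewrite !big_nil measure0.
rewrite !big_cons; case: (Q a) => //.
apply: le_trans (measureU2 _ _ _) _ => //; first exact: bigsetU_measurable.
exact: leeD.
Qed.

Lemma prode_le_exprn {R : realType} {I : Type} (s : seq I) (F : I -> \bar R) (c : R) :
  (forall i, (0 <= F i)%E) -> (forall i, (F i <= c%:E)%E) ->
  (\prod_(i <- s) F i <= (c ^+ size s)%:E)%E.
Proof.
move=> F0 Fc; elim: s => [|a s IH]; first by rewrite big_nil expr0.
by rewrite big_cons exprS EFinM lee_pmul// prode_ge0.
Qed.

Lemma esum_mem_seq_nneseries {R : realType} {I : choiceType} (s : seq I)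
  (f : I -> nat -> \bar R) : uniq s -> (forall i k, (0 <= f i k)%E) ->
  (\esum_(p in [set: I * nat]) (if p.1 \in s then f p.1 p.2 else 0) =
   \sum_(i <- s) \sum_(k <oo) f i k)%E.
Proof.
move=> us f0.
have -> : [set: I * nat] = [set: I] `*`` (fun _ => [set: nat]) by apply/seteqP; split.
rewrite -(@esum_esum _ _ _ _ _ (fun i k => if i \in s then f i k else 0%E)); last first.
  by move=> i k _ _; case: ifP.
rewrite (eq_esum (b := fun i => if i \in [set` s] then \sum_(k <oo) f i k else 0)%E).
  rewrite -esum_mkcond esum_fset; last 2 first.
  - exact: finite_seq.
  - by move=> i _; apply: nneseries_ge0.
  by rewrite -fsbig_seq.
move=> i _; rewrite mem_setE; case: ifP => _; last by rewrite esum1.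
by rewrite nneseries_esumT.
Qed.

Lemma exponential_prob_lt0 {R : realType} (r : R) : exponential_prob r `]-oo, 0[ = 0%E.
Proof.
rewrite /exponential_prob integral0_eq// => x /=; rewrite in_itv/= => x0.
by rewrite lt0_exponential_pdf.
Qed.

Lemma exponential_prob_le {R : realType} (r δ : R) : 0 < r -> 0 < δ ->
  (exponential_prob r `]-oo, δ] <= (r * δ)%:E)%E.
Proof.
move=> r0 d0.
have -> : `]-oo, δ]%classic = `]-oo, 0[%classic `|` `[0, δ]%classic :> set R.
  apply/seteqP; split => x /=; rewrite !in_itv/=.
    by case: (ltP x 0) => [x0|x0] xd; [left|right; rewrite xd].
  by case=> [/ltW x0|/andP[_ ->//]]; apply: le_trans x0 _; exact: ltW.
rewrite /exponential_prob ge0_integral_setU//=; last 3 first.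
- by apply/measurable_EFinP/measurable_funTS; exact: measurable_exponential_pdf.
- by move=> x _; rewrite lee_fin exponential_pdf_ge0// ltW.
- rewrite disj_set2E; apply/eqP/seteqP; split => // x [/=]; rewrite !in_itv/=.
  by move=> x0 /andP[/(lt_le_trans x0)]; rewrite ltxx.
rewrite -/(exponential_prob r _) -/(exponential_prob r _) exponential_prob_lt0 add0e.
rewrite exponential_prob_itv0c// -EFinD lee_fin.
have := expR_ge1Dx (- r * δ); rewrite mulNr; lra.
Qed.

Section ManySmallGaps.
Context {d} {Omega : measurableType d} {R : realType} {J : finType}.
Variable E : Omega -> int -> J -> nat -> R.

Definition gaps_below (x : int) (i : J) (δ : R) {n : nat} (L : {set 'I_n}) : set Omega :=
  [set w | forall j : 'I_n, j \in L -> E w x i j <= δ].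

Definition many_small_gaps (x : int) (i : J) (δ : R) n : set Omega :=
  \big[setU/set0]_(L : {set 'I_n} | (n <= 2 * #|L|)%N) gaps_below x i δ L.

(* At most [S / δ] of the gaps exceed [δ], where [S] is their sum. *)
Lemma many_small_gaps_of_sum_le x i δ n w : 0 < δ ->
  (forall j, (j < n)%N -> 0 <= E w x i j) ->
  2 * \sum_(j < n) E w x i j <= δ * (n.-1)%:R -> many_small_gaps x i δ n w.
Proof.
move=> d0 E0 sumE.
pose L := [set j : 'I_n | E w x i j <= δ]%SET.
have large_gaps : #|~: L|%:R * δ <= \sum_(j < n) E w x i j.
  rewrite [leRHS](bigID (fun j => j \in ~: L)) /= -[leLHS]addr0; apply: lerD.
    rewrite -sum1_card natr_sum mulr_suml; apply: ler_sum => j.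
    by rewrite !inE mul1r -ltNge => /ltW.
  by apply: sumr_ge0 => j _; exact: E0.
have halfL : (n <= 2 * #|L|)%N.
  suff : ((2 * #|~: L|)%:R <= (n.-1)%:R :> R).
    by rewrite ler_nat; have := cardsC L; rewrite card_ord; lia.
  rewrite -(ler_pM2r d0) natrM -mulrA [leRHS]mulrC.
  by apply: le_trans sumE; rewrite ler_pM2l.
rewrite /many_small_gaps (bigD1 L) //=; left => j.
by rewrite inE.
Qed.

Hypothesis mE : forall x i k, measurable_fun setT (fun w => E w x i k).

Lemma measurable_gap x i k (B : set R) : measurable B ->
  measurable [set w | B (E w x i k)].
Proof. by move=> mB; rewrite -(setTI [set w | _]); exact: mE. Qed.

Lemma measurable_gaps_below x i δ n (L : {set 'I_n}) :
  measurable (gaps_below x i δ L).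
Proof.
apply: (@fin_bigcap_measurable _ _ _ [set j | j \in L]); first exact: finite_finset.
move=> j _; have := @measurable_gap x i j _ (measurable_itv `]-oo, δ]).
by congr measurable; apply/seteqP; split => w; rewrite /= in_itv.
Qed.

Lemma measurable_many_small_gaps x i δ n : measurable (many_small_gaps x i δ n).
Proof. by apply: bigsetU_measurable => L _; exact: measurable_gaps_below. Qed.

Context {P : probability Omega R} {r : J -> R}.
Hypothesis dE : forall x i k, 0 < r i -> forall B : set R, measurable B ->
  P [set w | B (E w x i k)] = exponential_prob (r i) B.
Hypothesis iE : mutually_independent P E.

Lemma gaps_below_prob_le x i δ n (L : {set 'I_n}) : 0 < r i -> 0 < δ ->
  (P (gaps_below x i δ L) <= ((r i * δ) ^+ #|L|)%:E)%E.
Proof.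
move=> ri0 d0.
have -> : gaps_below x i δ L = [set w | forall p, p \in [seq (x, i, val j) | j <- enum L] ->
    `]-oo, δ]%classic (E w p.1.1 p.1.2 p.2)].
  apply/seteqP; split => w /= Lw.
    by move=> _ /mapP[j jL ->] /=; rewrite in_itv /= Lw // -mem_enum.
  by move=> j jL; have := Lw (x, i, val j); rewrite map_f ?mem_enum// in_itv /= => ->.
rewrite (iE _ (fun=> `]-oo, δ]%classic)); last 2 first.
- by rewrite map_inj_uniq ?enum_uniq // => j1 j2 [] /val_inj.
- by move=> _; exact: measurable_itv.
rewrite big_map cardE; apply: prode_le_exprn => [j|j]; first exact: measure_ge0.
by rewrite dE //; exact: exponential_prob_le.
Qed.

Lemma many_small_gaps_prob_le x i (δ ρ : R) n : 0 < r i -> 0 < δ ->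
  0 <= ρ <= 1 -> r i * δ <= ρ ^+ 2 ->
  (P (many_small_gaps x i δ n) <= ((2 * ρ) ^+ n)%:E)%E.
Proof.
move=> ri0 d0 /andP[rho0 rho1] rdrho.
apply: le_trans (measure_bigsetU_le P _ _ _ (measurable_gaps_below x i δ n)) _.
apply: (@le_trans _ _ (\sum_(L : {set 'I_n} | (n <= 2 * #|L|)%N) (ρ ^+ n)%:E)%E).
  apply: lee_sum => L HL; apply: le_trans (gaps_below_prob_le x i δ n L ri0 d0) _.
  rewrite lee_fin; apply: le_trans (_ : (ρ ^+ 2) ^+ #|L| <= _).
    by rewrite lerXn2r// ?nnegrE// mulr_ge0// ltW.
  by rewrite -exprM; apply: ler_wiXn2l.
rewrite sumEFin lee_fin.
apply: (@le_trans _ _ (\sum_(L : {set 'I_n}) ρ ^+ n)).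
  rewrite [leRHS](bigID (fun L : {set 'I_n} => (n <= 2 * #|L|)%N)) /= lerDl.
  by apply: sumr_ge0 => *; exact: exprn_ge0.
rewrite sumr_const -cardsT -powersetT card_powerset cardsT card_ord.
by rewrite exprMn -[in leLHS]mulr_natl natrX.
Qed.

Lemma ae_gaps_ge0 (sl : seq (int * J)) : (forall xi, xi \in sl -> 0 < r xi.2) ->
  {ae P, forall w, forall k xi, xi \in sl -> 0 <= E w xi.1 xi.2 k}.
Proof.
move=> sl_r; apply: ae_foralln => k.
elim: sl sl_r => [|xi sl IH] sl_r; first by apply: aeW => w xi; rewrite in_nil.
have gap_ge0 : {ae P, forall w, 0 <= E w xi.1 xi.2 k}.
  exists [set w | `]-oo, 0[%classic (E w xi.1 xi.2 k)]; split.
  - exact: (@measurable_gap xi.1 xi.2 k _ (measurable_itv `]-oo, 0[)).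
  - by rewrite dE ?exponential_prob_lt0 ?sl_r ?mem_head //; exact: measurable_itv.
  - by move=> w /= /negP; rewrite -ltNge in_itv.
have sl_r' xi' : xi' \in sl -> 0 < r xi'.2 by move=> xi'sl; rewrite sl_r // in_cons xi'sl orbT.
apply: filterS2 gap_ge0 (IH sl_r') => w Exi Esl xi'.
by rewrite in_cons => /orP[/eqP -> //|]; exact: Esl.
Qed.

End ManySmallGaps.

Lemma expR_le_split {R : realType} (lam' mu lam β S τ : R) (k : nat) (b : bool) :
  lam' <= mu -> mu <= lam -> 0 <= mu -> 0 <= S -> S <= τ -> (S <= β * k%:R -> b) ->
  expR (lam' * S) <= expR (mu * β) ^+ k * b%:R + expR (- (lam - mu) * β) ^+ k * expR (lam * τ).
Proof.
move=> lmu mul mu0 S0 Sτ Sb.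
have le_muτ : expR (lam' * S) <= expR (mu * τ).
  by rewrite ler_expR (le_trans (ler_wpM2r S0 lmu)) ?ler_wpM2l.
apply: le_trans le_muτ _; rewrite -!expRM_natr.
have [τβ|βτ] := leP τ (β * k%:R).
  rewrite Sb ?(le_trans Sτ)// mulr1 -[leLHS]addr0 lerD ?mulr_ge0 ?expR_ge0//.
  by rewrite ler_expR -mulrA ler_wpM2l.
rewrite -[leLHS]add0r lerD ?mulr_ge0 ?expR_ge0// -expRD ler_expR.
have : (lam - mu) * (β * k%:R) <= (lam - mu) * τ by rewrite ler_wpM2l ?subr_ge0 // ltW.
nra.
Qed.

(* With [ρ := 1 / (4 e^(μβ))], a gap [Exp(r)] is [<= 2β] with probability at most [ρ^2]. *)
Lemma exists_gap_scale {R : realType} (mu rs : R) : 0 <= mu -> 0 <= rs ->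
  exists2 β : R, 0 < β & rs * (2 * β) <= ((4 * expR (mu * β))^-1) ^+ 2.
Proof.
move=> mu0 rs0.
pose e := expR mu.
have e1 : 1 <= e by rewrite -expR0 ler_expR.
pose K := 32 * rs * e ^+ 2.
have K0 : 0 <= K by rewrite !mulr_ge0 ?exprn_ge0 ?(le_trans ler01 e1).
exists (1 + K)^-1; first by rewrite invr_gt0; lra.
set β := (1 + K)^-1.
have β0 : 0 < β by rewrite invr_gt0; lra.
have βK : β * K <= 1 by rewrite mulrC ler_pdivrMr; lra.
have X1 : 1 <= expR (mu * β) by rewrite -expR0 ler_expR mulr_ge0 // ltW.
have Xe : expR (mu * β) <= e by rewrite ler_expR ler_piMr// invf_le1; lra.
rewrite exprVn exprMn -[leRHS]mul1r ler_pdivlMr; last by rewrite mulr_gt0 // exprn_gt0; lra.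
apply: le_trans βK; rewrite /K.
have : expR (mu * β) ^+ 2 <= e ^+ 2 by rewrite lerXn2r// nnegrE; lra.
have : 0 <= rs * β by rewrite mulr_ge0 // ltW.
nra.
Qed.

Lemma geometric_majorant_le {R : realType} (c X ρ q L : R) (k : nat) :
  0 <= c -> 0 <= ρ -> 0 <= q -> 0 <= L -> X * (2 * ρ) = 2^-1 ->
  c * X ^+ k * (2 * ρ) ^+ k.+1 + c * q ^+ k * L
    <= c * (2 * ρ + L) * Num.max 2^-1 q ^+ k.
Proof.
move=> c0 ρ0 q0 L0 Xρ.
have max0 : 0 <= Num.max 2^-1 q by rewrite le_max q0 orbT.
have small : X ^+ k * (2 * ρ) ^+ k.+1 <= 2 * ρ * Num.max 2^-1 q ^+ k.
  rewrite exprS mulrCA -exprMn Xρ ler_wpM2l ?mulr_ge0 //.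
  by apply: lerXn2r; rewrite ?nnegrE ?invr_ge0 // le_max lexx.
have late : q ^+ k <= Num.max 2^-1 q ^+ k.
  by apply: lerXn2r; rewrite ?nnegrE // le_max lexx orbT.
have := ler_wpM2l c0 small; have := ler_wpM2l c0 (ler_wpM2r L0 late).
rewrite !mulrA; nra.
Qed.

Lemma mem_window (a b : nat) (z : int) : - (a%:Z) <= z <= b%:Z ->
  z \in [seq m%:Z - a%:Z | m <- iota 0 (a + b).+1].
Proof.
move=> /andP[za zb]; have za0 : 0 <= z + a%:Z by rewrite -lerBlDr sub0r.
apply/mapP; exists (absz (z + a%:Z)); last by rewrite gez0_abs // addrK.
rewrite mem_iota add0n ltnS -lez_nat gez0_abs //; lia.
Qed.

Lemma finite_window_sites {J : finType} (A : J -> seq int) (p : pred J) (a b : nat) :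
  exists sl : seq (int * J), [/\ uniq sl, forall xi, xi \in sl -> p xi.2 &
    forall x i y, p i -> y \in A i -> - (a%:Z) <= x + y <= b%:Z -> (x, i) \in sl].
Proof.
pose window := [seq m%:Z - a%:Z | m <- iota 0 (a + b).+1].
exists (undup [seq xi <- flatten [seq [seq (z - y, j) | y <- A j, z <- window] | j <- enum J]
  | p xi.2]).
split; first exact: undup_uniq.
  by move=> xi; rewrite mem_undup mem_filter => /andP[].
move=> x i y pi yA /mem_window xyW; rewrite mem_undup mem_filter pi /=.
have xi_y : (x, i) \in [seq (z - y, i) | z <- window] by rewrite -{1}(addrK y x) map_f.
apply/flatten_mapP; exists i; first by rewrite mem_enum.
by apply/flatten_mapP; exists y; [exact: yA | exact: xi_y].
Qed.

Section WindowMajorant.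
Context {d} {Omega : measurableType d} {R : realType} {P : probability Omega R}.
Context {J : finType} {r : J -> R} {E : Omega -> int -> J -> nat -> R} {T : Omega -> R}.
Hypothesis mE : forall x i k, measurable_fun setT (fun w => E w x i k).
Hypothesis dE : forall x i k, 0 < r i -> forall B : set R, measurable B ->
  P [set w | B (E w x i k)] = exponential_prob (r i) B.
Hypothesis iE : mutually_independent P E.
Hypothesis mT : measurable_fun setT T.
Context {lam mu β : R} {c : nat}.
Hypotheses (mu0 : 0 <= mu) (mu_lam : mu < lam) (β0 : 0 < β).

Let X := expR (mu * β).
Let ρ := (4 * X)^-1.
Let q := expR (- (lam - mu) * β).
Hypothesis rβ : forall i, r i * (2 * β) <= ρ ^+ 2.

Definition window_majorant (xi : int * J) (k : nat) (w : Omega) : \bar R :=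
  (c%:R * (X ^+ k * \1_(many_small_gaps E xi.1 xi.2 (2 * β) k.+1) w
           + q ^+ k * expR (- lam * T w)))%:E.

Lemma window_majorant_ge0 xi k w : (0 <= window_majorant xi k w)%E.
Proof.
by rewrite lee_fin mulr_ge0 // addr_ge0 // mulr_ge0 ?exprn_ge0 ?expR_ge0 // indicE.
Qed.

Lemma measurable_window_majorant xi k : measurable_fun setT (window_majorant xi k).
Proof.
apply/measurable_EFinP/measurable_funM => //.
apply: measurable_funD; apply: measurable_funM => //.
  exact/measurable_indic/measurable_many_small_gaps.
by apply: measurableT_comp => //; exact: measurable_funM.
Qed.

Lemma integral_window_majorant_le xi k (Lt : R) : 0 < r xi.2 ->
  Lambda_T P T lam = Lt%:E ->
  (\int[P]_w window_majorant xi k w <= (c%:R * (2 * ρ + Lt) * Num.max 2^-1 q ^+ k)%:E)%E.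
Proof.
move=> rxi LtE.
have X1 : 1 <= X by rewrite -expR0 ler_expR mulr_ge0 // ltW.
have ρ01 : 0 <= ρ <= 1 by rewrite invr_ge0 invf_le1; lra.
have Xρ : X * (2 * ρ) = 2^-1 by rewrite /ρ invfM; field; rewrite gt_eqF // expR_gt0.
have Lt0 : 0 <= Lt.
  by rewrite -lee_fin -LtE; apply: integral_ge0 => w _; rewrite lee_fin expR_ge0.
pose U := many_small_gaps E xi.1 xi.2 (2 * β) k.+1.
rewrite (eq_integral (fun w => (c%:R * X ^+ k)%:E * (\1_U w)%:E
    + (c%:R * q ^+ k)%:E * (expR (- lam * T w))%:E)%E); last first.
  by move=> w _; rewrite /window_majorant -!EFinM -EFinD mulrDr !mulrA.
have mU : measurable U by exact: measurable_many_small_gaps.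
have mindU : measurable_fun setT (fun w => (\1_U w)%:E : \bar R).
  by apply/measurable_EFinP; exact: measurable_indic.
have cX0 : 0 <= c%:R * X ^+ k by rewrite mulr_ge0 // exprn_ge0 // expR_ge0.
have cq0 : 0 <= c%:R * q ^+ k by rewrite mulr_ge0 // exprn_ge0 // expR_ge0.
have mexpT : measurable_fun setT (fun w => (expR (- lam * T w))%:E : \bar R).
  by apply/measurable_EFinP/measurableT_comp => //; exact: measurable_funM.
rewrite ge0_integralD //; last 4 first.
- by move=> w _; rewrite -EFinM lee_fin mulr_ge0 // indicE.
- exact: measurable_funeM.
- by move=> w _; rewrite -EFinM lee_fin mulr_ge0 // expR_ge0.
- exact: measurable_funeM.
rewrite !ge0_integralZl_EFin // integral_indic // setIT -/(Lambda_T P T lam) LtE.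
apply: (@le_trans _ _ ((c%:R * X ^+ k)%:E * ((2 * ρ) ^+ k.+1)%:E
    + (c%:R * q ^+ k)%:E * Lt%:E)%E).
  apply: leeD => //; apply: lee_pmul => //.
  by apply: (many_small_gaps_prob_le _ mE dE iE) => //; rewrite mulr_gt0.
rewrite -!EFinM -EFinD lee_fin geometric_majorant_le // ?expR_ge0 //.
by case/andP: ρ01.
Qed.

Lemma measurable_window_series xi :
  measurable_fun setT (fun w => \sum_(k <oo) window_majorant xi k w)%E.
Proof.
apply: ge0_emeasurable_sum => k *; first exact: window_majorant_ge0.
exact: measurable_window_majorant.
Qed.

Lemma integral_window_majorant_lt_pinfty (sl : seq (int * J)) :
  (forall xi, xi \in sl -> 0 < r xi.2) -> (Lambda_T P T lam < +oo)%E ->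
  (\int[P]_w \sum_(xi <- sl) \sum_(k <oo) window_majorant xi k w < +oo)%E.
Proof.
move=> sl_r LT.
have LT0 : (0 <= Lambda_T P T lam)%E.
  by apply: integral_ge0 => w _; rewrite lee_fin expR_ge0.
have LtE : Lambda_T P T lam = (fine (Lambda_T P T lam))%:E.
  by rewrite fineK // ge0_fin_numE.
have q_lt1 : q < 1 by rewrite expR_lt1 mulNr oppr_lt0 mulr_gt0 // subr_gt0.
have q'01 : 0 <= Num.max 2^-1 q < 1.
  by rewrite le_max gt_max q_lt1 invr_ge0 ler0n /= invf_lt1 ?ltr1n.
rewrite ge0_integral_sum //; last 2 first.
  exact: measurable_window_series.
  by move=> xi w _; apply: nneseries_ge0 => k _ _; exact: window_majorant_ge0.
rewrite big_seq; apply: lte_sum_pinfty => xi /sl_r rxi.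
rewrite integral_nneseries //; last 2 first.
- by move=> k; exact: measurable_window_majorant.
- by move=> k w _; exact: window_majorant_ge0.
apply: (nneseries_lt_pinfty_geometric _ (c%:R * (2 * ρ + fine (Lambda_T P T lam))) _ q'01) => k.
  by apply: integral_ge0 => w _; exact: window_majorant_ge0.
exact: integral_window_majorant_le.
Qed.

Lemma window_majorant_ge_weight x i k w (n : nat) (lam' : R) :
  (n <= c)%N -> lam' <= mu -> (forall j, 0 <= E w x i j) ->
  \sum_(j < k.+1) E w x i j <= - T w ->
  ((n%:R)%:E * expeR ((- lam')%:E * (- \sum_(j < k.+1) E w x i j)%:E)
    <= window_majorant (x, i) k w)%E.
Proof.
move=> nc lmu E0 ST.
rewrite /window_majorant -EFinM /= lee_fin mulrNN.
apply: ler_pM; rewrite ?ler0n ?expR_ge0 ?ler_nat // indicE mulNr -mulrN.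
apply: expR_le_split => //; first exact: ltW.
- by apply: sumr_ge0 => j _.
- move=> Sβ; apply/mem_set/many_small_gaps_of_sum_le => //; first exact: mulr_gt0.
  by rewrite -mulrA ler_pM2l.
Qed.

Lemma window_integrand_le (A : J -> seq int) (h : int -> J -> nat -> bool)
    (sl : seq (int * J)) (lam' : R) w :
  uniq sl -> (forall i, (size (A i) <= c)%N) -> lam' <= mu ->
  (forall x i k, (psi_of r E w x i k < (T w)%:E)%E -> ~~ h x i k) ->
  (forall x i k y, h x i k -> 0 < r i -> y \in A i -> (x, i) \in sl) ->
  (forall k xi, xi \in sl -> 0 <= E w xi.1 xi.2 k) ->
  (\esum_(p in [set: int * J * nat])
      (if h p.1.1 p.1.2 p.2
       then (size (A p.1.2))%:R%:E * expeR ((- lam')%:E * psi_of r E w p.1.1 p.1.2 p.2)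
       else 0)
   <= \sum_(xi <- sl) \sum_(k <oo) window_majorant xi k w)%E.
Proof.
move=> usl Ac lmu h_late h_sl E0.
rewrite -esum_mem_seq_nneseries //; last by move=> ? ?; exact: window_majorant_ge0.
apply: le_esum => -[[x i] k] _ /=.
case hxik: (h x i k); last by case: ifP => // _; exact: window_majorant_ge0.
have ri : 0 < r i.
  have := h_late x i k; rewrite hxik /psi_of; case: ifP => // _.
  by move/(_ (ltNyr _)).
case Ai: (A i) => [|y As].
  by rewrite mul0e; case: ifP => // _; exact: window_majorant_ge0.
have xi_sl : (x, i) \in sl by apply: (h_sl x i k y); rewrite ?Ai ?mem_head.
rewrite xi_sl -Ai /psi_of ri; apply: window_majorant_ge_weight => //.
  by move=> j; exact: (E0 j (x, i) xi_sl).
rewrite lerNr leNgt; apply/negP => late.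
by move: (h_late x i k); rewrite /psi_of ri lte_fin late hxik => /(_ isT).
Qed.

End WindowMajorant.

Theorem lemma4p13 (d : measure_display) (Omega : measurableType d)
  (R : realType) (P : probability Omega R) (J S : finType)
  (A : J -> seq int) (ell : J -> pred (seq S)) (s : J -> S) (r : J -> R)
  (Psi : Omega -> int -> J -> nat -> \bar R)
  (H : Omega -> int -> J -> nat -> bool) (T : Omega -> R) (lam : R) :
  (forall i, uniq (A i)) ->
  (forall i, 0 <= r i) ->
  poisson_family P r Psi ->
  measurable_fun setT T ->
  coupling_time P A ell s Psi H T ->
  (exists a b : nat, width_bounded P A ell s Psi H T a b) ->
  0 < lam ->
  (Lambda_T P T lam < +oo)%E ->
  forall lam' : R, lam' < lam -> (Lambda_H P A Psi H lam' < +oo)%E.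
Proof.
move=> _ r0 [E [mE dE iE PsiE]] mT [_ _ H_late _ _] [a [b [_ H_window _]]] lam0 LT.
move=> lam' lam'_lam.
have {}PsiE : Psi = psi_of r E.
  by apply/funext => w; apply/funext => x; apply/funext => i; apply/funext => k.
subst Psi.
pose mu := Num.max lam' 0.
have mu0 : 0 <= mu by rewrite le_max lexx orbT.
have lam'_mu : lam' <= mu by rewrite le_max lexx.
have mu_lam : mu < lam by rewrite gt_max lam'_lam lam0.
have r_le_sum i : r i <= \sum_j r j by rewrite (bigD1 i) //= lerDl sumr_ge0.
have sumr0 : 0 <= \sum_j r j by exact: sumr_ge0.
have [β β0 sumrβ] := exists_gap_scale _ _ mu0 sumr0.
have rβ i : r i * (2 * β) <= ((4 * expR (mu * β))^-1) ^+ 2.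
  by apply: le_trans sumrβ; rewrite ler_wpM2r // mulr_ge0 // ltW.
pose c := \max_j size (A j).
have Ac i : (size (A i) <= c)%N by exact: leq_bigmax.
have [sl [usl sl_r sl_window]] := finite_window_sites A (fun i => 0 < r i) a b.
apply: (le_lt_trans _
  (integral_window_majorant_lt_pinfty mE dE iE mT (c:=c) mu0 mu_lam β0 rβ _ sl_r LT)).
apply: ge0_le_integral_ae_majorant.
- move=> w; apply: esum_ge0 => p _; case: ifP => // _.
  by rewrite mule_ge0 // ?lee_fin // expeR_ge0.
- by move=> w; apply: sume_ge0 => xi _; apply: nneseries_ge0 => k _ _; exact: window_majorant_ge0.
- by apply: emeasurable_sum => xi; exact: measurable_window_series.
apply: filterS3 H_late H_window (ae_gaps_ge0 _ mE dE _ sl_r) => w late window E0.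
apply: window_integrand_le => // [x i k xT|x i k y /window win ri yA].
  by rewrite (late x i k xT).
exact: sl_window ri yA (win y yA).
Qed.
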